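(* Let $p\in(1,\infty)$. In the Banach space $\ell_p$ every closed convex cone has a convex polar if and only if $p=2$. More specifically, for $p\neq 2$ there exist wedges in $\ell_p$ (already in a three-dimensional coordinate subspace $\ell_p^3$) whose polars are not convex.
   Context: $\ell_p$ is the real sequence space with norm $\|z\|_p=(\sum_i|z_i|^p)^{1/p}$; its dual is $\ell_q$ with $q=p/(p-1)$ and the usual pairing. The normalized duality map $J:X\to X^*$ of a Banach space is defined by $\langle Jx,x\rangle=\|Jx\|_{X^*}\|x\|=\|x\|^2=\|Jx\|_{X^*}^2$. For a closed convex cone $K$, the metric projection is $P_Kx=\operatorname{argmin}\{\|x-k\|:k\in K\}$ and the polar is $K^\circ=\{x:P_Kx=0\}$. With $S^*$ the dual unit sphere, for $a,b\in S^*$, $b\notin\{a,-a\}$, $\delta(a,b)=\{(\lambda a+\mu b)/\|\lambda a+\mu b\|:\lambda,\mu\ge0,(\lambda,\mu)\ne(0,0)\}$ and the wedge is $W(a,b)=\{x:\langle c,x\rangle\le 0\ \forall c\in\delta(a,b)\}$. *)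

From mathcomp Require Import all_boot all_order all_algebra.
From mathcomp Require Import all_classical all_reals all_analysis.
Set Implicit Arguments. Unset Strict Implicit. Unset Printing Implicit Defensive.
Import Order.TTheory GRing.Theory Num.Theory numFieldNormedType.Exports.
Local Open Scope classical_set_scope.
Local Open Scope ring_scope.

Section Lp.
Variable R : realType.

Definition conj_exp (p : R) : R := p / (p - 1).

Definition in_lp (p : R) (x : nat -> R) : Prop :=
  cvgn (series (fun i => `|x i| `^ p)).

Definition lpnorm (p : R) (x : nat -> R) : R :=
  (limn (series (fun i => `|x i| `^ p))) `^ p^-1.

Definition pairing (c x : nat -> R) : R :=
  limn (series (fun i => c i * x i)).

Definition lp_closed (p : R) (K : set (nat -> R)) : Prop :=
  forall (u : nat -> nat -> R) (x : nat -> R),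
    (forall n, K (u n)) -> in_lp p x ->
    (fun n => lpnorm p (fun i => u n i - x i)) @ \oo --> (0 : R) -> K x.

Definition cvx_set (K : set (nat -> R)) : Prop :=
  forall x y (t : R), K x -> K y -> 0 <= t -> t <= 1 ->
    K (fun i => t * x i + (1 - t) * y i).

Definition cone (K : set (nat -> R)) : Prop :=
  forall x (l : R), K x -> 0 <= l -> K (fun i => l * x i).

Definition closed_convex_cone (p : R) (K : set (nat -> R)) : Prop :=
  K `<=` in_lp p /\ lp_closed p K /\ cvx_set K /\ cone K.

Definition metric_proj (p : R) (K : set (nat -> R)) (x : nat -> R) : set (nat -> R) :=
  [set k | K k /\ forall k', K k' ->
     lpnorm p (fun i => x i - k i) <= lpnorm p (fun i => x i - k' i)].

Definition polar (p : R) (K : set (nat -> R)) : set (nat -> R) :=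
  [set x | in_lp p x /\ metric_proj p K x = [set (fun _ => 0)]].

Definition dual_sphere (p : R) (a : nat -> R) : Prop :=
  in_lp (conj_exp p) a /\ lpnorm (conj_exp p) a = 1.

Definition delta (p : R) (a b : nat -> R) : set (nat -> R) :=
  [set c | exists l m : R, 0 <= l /\ 0 <= m /\ (l != 0 \/ m != 0) /\
     c = (fun i => (l * a i + m * b i) /
                   lpnorm (conj_exp p) (fun j => l * a j + m * b j))].

Definition wedge (p : R) (a b : nat -> R) : set (nat -> R) :=
  [set x | in_lp p x /\ forall c, delta p a b c -> pairing c x <= 0].

End Lp.

(* For p = 2 the square expands, ||x - k||^2 = ||x||^2 - 2 <x, k> + ||k||^2, so the polar of a
   cone K is {x | <x, k> <= 0 for all k in K}: an intersection of half-spaces, hence convex.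
   For p <> 2 take a, b proportional to e0 + e1 and e0 + e2, so that W(a, b) is
   {x | x0 + x1 <= 0, x0 + x2 <= 0}.  Bernoulli's inequality |1 - t|^p >= 1 - p t, strict for
   t <> 0, puts e0 + e1 and e0 + e2 in the polar of W.  Their midpoint z = (1, 1/2, 1/2) is not
   in it: along k = (d, -d, -d), which lies in W, ||z - k||_p^p = |1 - d|^p + 2 |1/2 + d|^p has
   derivative p (2^(2-p) - 1) at d = 0, nonzero for p <> 2, so some such k is closer to z than 0. *)

From mathcomp Require Import all_boot all_order all_algebra.
From mathcomp Require Import all_classical all_reals all_analysis.
From mathcomp Require Import ring lra.
Set Implicit Arguments. Unset Strict Implicit. Unset Printing Implicit Defensive.
Import Order.TTheory GRing.Theory Num.Theory numFieldNormedType.Exports.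
Local Open Scope classical_set_scope.
Local Open Scope ring_scope.

Section LpCones.
Variable R : realType.
Implicit Types (p t s e : R) (f v x y k : nat -> R) (K : set (nat -> R)).

Definition finsupp (n : nat) v := forall i, (n <= i)%N -> v i = 0.

Definition lpsum p v := limn (series (fun i => `|v i| `^ p)).

Lemma series_finsupp n f : finsupp n f -> series f @ \oo --> \sum_(0 <= i < n) f i.
Proof.
move=> fn; apply: cvg_near_cst; near=> m.
have nm : (n <= m)%N by near: m; exists n.
rewrite /series /= (@big_cat_nat _ _ _ n 0 m _ _ (leq0n n) nm) /=.
rewrite [X in _ + X]big_nat_cond [X in _ + X]big1 ?addr0// => i.
by case/andP => /andP[/fn].
Unshelve. all: by end_near. Qed.

Lemma lim_series_finsupp n f : finsupp n f -> limn (series f) = \sum_(0 <= i < n) f i.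
Proof. by move/series_finsupp/cvg_lim; apply. Qed.

Lemma is_cvg_series_finsupp n f : finsupp n f -> cvgn (series f).
Proof. by move/series_finsupp/cvgP. Qed.

Lemma series_le_lim f n : (forall i, 0 <= f i) -> cvgn (series f) ->
  series f n <= limn (series f).
Proof.
move=> f0 cf; apply: nondecreasing_cvgn_le => // a b ab.
exact: (nondecreasing_series (fun i _ _ => f0 i)).
Qed.

Lemma lim_series_gt0 f j : (forall i, 0 <= f i) -> cvgn (series f) ->
  0 < f j -> 0 < limn (series f).
Proof.
move=> f0 cf fj; apply: (lt_le_trans _ (series_le_lim j.+1 f0 cf)).
by rewrite /series /= big_nat_recr//= ltr_wpDl ?sumr_ge0.
Qed.

Lemma lim_series_lt f g j : cvgn (series f) -> cvgn (series g) ->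
  (forall i, f i <= g i) -> f j < g j -> limn (series f) < limn (series g).
Proof.
move=> cf cg fg fgj; rewrite -subr_gt0 -lim_seriesB//.
apply: (lim_series_gt0 (j := j) _ (is_cvg_seriesB cg cf)).
  by move=> i; rewrite fctE subr_ge0.
by rewrite fctE subr_gt0.
Qed.

Lemma is_cvg_series_comb t s f g : cvgn (series f) -> cvgn (series g) ->
  cvgn (series (fun i => t * f i + s * g i)).
Proof. by move=> cf cg; apply: is_cvg_seriesD; apply: is_cvg_seriesZ. Qed.

Lemma lim_series_comb t s f g : cvgn (series f) -> cvgn (series g) ->
  limn (series (fun i => t * f i + s * g i)) =
  t * limn (series f) + s * limn (series g).
Proof.
move=> cf cg; rewrite -[t * _](lim_seriesZ t cf) -[s * _](lim_seriesZ s cg).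
by rewrite -lim_seriesD; [|exact: is_cvg_seriesZ..].
Qed.

Lemma powR_normD_le p (a b : R) : 0 <= p ->
  `|a + b| `^ p <= 2 `^ p * (`|a| `^ p + `|b| `^ p).
Proof.
move=> p0; wlog ab : a b / `|a| <= `|b|.
  move=> hw; have [|/ltW] := leP `|a| `|b|; first exact: hw.
  by rewrite addrC [_ + `|b| `^ p]addrC; apply: hw.
have aDb : `|a + b| <= 2 * `|b| by rewrite (le_trans (ler_normD _ _))// mulr2n mulrDl mul1r lerD2r.
rewrite (le_trans (ge0_ler_powR p0 _ _ aDb)) ?nnegrE// powRM// ler_wpM2l ?powR_ge0//.
by rewrite lerDr powR_ge0.
Qed.

Lemma in_lpD p x y : 0 <= p -> in_lp p x -> in_lp p y -> in_lp p (fun i => x i + y i).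
Proof.
move=> p0 cx cy; apply: (series_le_cvg _ _ (fun i => powR_normD_le (x i) (y i) p0)).
- by move=> i; rewrite powR_ge0.
- by move=> i; rewrite mulr_ge0 ?addr_ge0 ?powR_ge0.
- exact/is_cvg_seriesZ/is_cvg_seriesD.
Qed.

Lemma in_lpZ p t x : 0 <= p -> in_lp p x -> in_lp p (fun i => t * x i).
Proof.
move=> p0 cx; rewrite /in_lp; under eq_fun do rewrite normrM powRM//.
exact: is_cvg_seriesZ.
Qed.

Lemma in_lpB p x y : 0 <= p -> in_lp p x -> in_lp p y -> in_lp p (fun i => x i - y i).
Proof.
move=> p0 cx cy; have := in_lpD p0 cx (in_lpZ (t := -1) p0 cy).
by under eq_fun do rewrite mulN1r.
Qed.

Lemma in_lp_finsupp n p v : 0 < p -> finsupp n v -> in_lp p v.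
Proof.
move=> p0 vn; apply: (is_cvg_series_finsupp (n := n)) => i /vn ->.
by rewrite normr0 powR0// gt_eqF.
Qed.

Lemma lpsum_finsupp n p v : 0 < p -> finsupp n v ->
  lpsum p v = \sum_(0 <= i < n) `|v i| `^ p.
Proof.
move=> p0 vn; apply: lim_series_finsupp => i /vn ->.
by rewrite normr0 powR0// gt_eqF.
Qed.

Lemma lpsum_ge0 p v : in_lp p v -> 0 <= lpsum p v.
Proof.
move=> cv; apply: (le_trans _ (series_le_lim 0 _ cv)); first by rewrite /series/= big_geq.
by move=> i; rewrite powR_ge0.
Qed.

Lemma nonzero_coord v : v <> (fun=> 0) -> exists i, v i != 0.
Proof.
by move=> v0; apply: contrapT => /forallNP v0'; apply/v0/funext => i; apply/eqP/negbNE/negP/v0'.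
Qed.

Lemma lpsum_gt0 p v : in_lp p v -> v <> (fun=> 0) -> 0 < lpsum p v.
Proof.
move=> cv /nonzero_coord[i vi]; apply: (lim_series_gt0 (j := i) _ cv).
  by move=> j; rewrite powR_ge0.
by rewrite powR_gt0// normr_gt0.
Qed.

Lemma lpnorm_leE p v w : 0 < p -> in_lp p v -> in_lp p w ->
  (lpnorm p v <= lpnorm p w) = (lpsum p v <= lpsum p w).
Proof.
move=> p0 cv cw; have ip0 : 0 < p^-1 by rewrite invr_gt0.
have [v0 w0] := (lpsum_ge0 cv, lpsum_ge0 cw).
apply/idP/idP => [|vw]; last by rewrite ge0_ler_powR ?nnegrE// ltW.
by apply: contraTT; rewrite -!ltNge => wv; rewrite gt0_ltr_powR ?nnegrE.
Qed.

Lemma coord_le_lpnorm p v i : 0 < p -> in_lp p v -> `|v i| <= lpnorm p v.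
Proof.
move=> p0 cv; have f0 j : 0 <= `|v j| `^ p by rewrite powR_ge0.
rewrite /lpnorm -[`|v i|]powRr1// -(mulfV (lt0r_neq0 p0)) powRrM.
apply: ge0_ler_powR; rewrite ?nnegrE ?invr_ge0 ?(ltW p0) ?(lpsum_ge0 cv)//.
apply: (le_trans _ (series_le_lim i.+1 f0 cv)).
by rewrite /series/= big_nat_recr//= lerDr sumr_ge0.
Qed.

Lemma cvg_coord_lp p (u : nat -> nat -> R) x i : 0 < p ->
  (forall m, in_lp p (u m)) -> in_lp p x ->
  lpnorm p (fun j => u m j - x j) @[m --> \oo] --> 0 -> u m i @[m --> \oo] --> x i.
Proof.
move=> p0 cu cx /cvgrPdist_lt ux; apply/cvgrPdist_lt => e e0.
apply: filterS (ux e e0) => m; rewrite sub0r normrN distrC; apply: le_lt_trans.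
exact: le_trans (coord_le_lpnorm i p0 (in_lpB (ltW p0) (cu m) cx)) (ler_norm _).
Qed.

Lemma pairingZl t x y : cvgn (series (fun i => x i * y i)) ->
  pairing (fun i => t * x i) y = t * pairing x y.
Proof.
move=> cxy; rewrite /pairing -[RHS]lim_seriesZ//.
by congr (limn (series _)); apply/funext => i; rewrite -mulrA.
Qed.

Lemma pairing_combl t s x y k :
  cvgn (series (fun i => x i * k i)) -> cvgn (series (fun i => y i * k i)) ->
  pairing (fun i => t * x i + s * y i) k = t * pairing x k + s * pairing y k.
Proof.
move=> cxk cyk; rewrite /pairing -lim_series_comb//.
by under eq_fun do rewrite mulrDl -!mulrA.
Qed.

Lemma pairing_finsupp n c x : finsupp n c -> pairing c x = \sum_(0 <= i < n) c i * x i.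
Proof. by move=> cn; apply: lim_series_finsupp => i /cn ->; rewrite mul0r. Qed.

Lemma is_cvg_pairing_finsupp n c x : finsupp n c -> cvgn (series (fun i => c i * x i)).
Proof. by move=> cn; apply: (is_cvg_series_finsupp (n := n)) => i /cn ->; rewrite mul0r. Qed.

Lemma pairing0r n (c : nat -> R) : finsupp n c -> pairing c (fun=> 0) = 0.
Proof. by move=> cn; rewrite (pairing_finsupp _ cn) big1// => i _; rewrite mulr0. Qed.

Lemma pairing_finsupp_combr n c t s x y : finsupp n c ->
  pairing c (fun i => t * x i + s * y i) = t * pairing c x + s * pairing c y.
Proof.
move=> cn; rewrite !(pairing_finsupp _ cn) !mulr_sumr -big_split /=.
by apply: eq_bigr => i _; ring.
Qed.

Lemma pairing_finsuppZr n c t x : finsupp n c ->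
  pairing c (fun i => t * x i) = t * pairing c x.
Proof.
by move=> cn; rewrite !(pairing_finsupp _ cn) mulr_sumr; apply: eq_bigr => i _; rewrite mulrCA.
Qed.

Lemma cvg_pairing_finsupp n c (u : nat -> nat -> R) x : finsupp n c ->
  (forall i, u m i @[m --> \oo] --> x i) -> pairing c (u m) @[m --> \oo] --> pairing c x.
Proof.
move=> cn ux; rewrite (pairing_finsupp _ cn); under eq_fun do rewrite (pairing_finsupp _ cn).
apply: cvg_big => [|i _]; first exact: add_continuous.
exact: cvgM (cvg_cst _) (ux i).
Qed.

Lemma polar_lpsum_le p K x : 0 < p -> K `<=` in_lp p -> polar p K x ->
  K (fun=> 0) /\ forall k, K k -> lpsum p x <= lpsum p (fun i => x i - k i).
Proof.
move=> p0 Kp [cx Px]; have : metric_proj p K x (fun=> 0) by rewrite Px.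
case=> K0 min0; split=> // k Kk; have := min0 _ Kk.
under eq_fun do rewrite subr0.
by rewrite (lpnorm_leE p0 cx (in_lpB (ltW p0) cx (Kp _ Kk))).
Qed.

Lemma polar_of_lpsum_lt p K x : 0 < p -> K `<=` in_lp p -> K (fun=> 0) -> in_lp p x ->
  (forall k, K k -> k <> (fun=> 0) -> lpsum p x < lpsum p (fun i => x i - k i)) ->
  polar p K x.
Proof.
move=> p0 Kp K0 cx xlt; have cxk k : K k -> in_lp p (fun i => x i - k i).
  by move=> /Kp; apply: in_lpB => //; exact: ltW.
have x0E : (fun i => x i - 0) = x by apply/funext => i; rewrite subr0.
split=> //; apply/seteqP; split=> [k [Kk kmin]|_ ->] /=.
- apply: contrapT => k0; have := kmin _ K0; rewrite x0E.
  rewrite (lpnorm_leE p0 (cxk _ Kk) cx) => kx.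
  by have := lt_le_trans (xlt _ Kk k0) kx; rewrite ltxx.
- split=> [//|k Kk]; rewrite x0E.
  have [->|k0] := pselect (k = fun=> 0); first by rewrite x0E.
  by rewrite (lpnorm_leE p0 cx (cxk _ Kk)) ltW// xlt.
Qed.

Lemma powR2_norm (a : R) : `|a| `^ 2 = a * a.
Proof. by rewrite powR_mulrn// real_normK ?num_real// expr2. Qed.

Lemma lpsum2E v : lpsum 2 v = pairing v v.
Proof. by rewrite /lpsum; under eq_fun do rewrite powR2_norm. Qed.

Lemma in_lp2E v : in_lp 2 v = cvgn (series (fun i => v i * v i)).
Proof. by rewrite /in_lp; under eq_fun do rewrite powR2_norm. Qed.

Lemma is_cvg_pairing2 x y : in_lp 2 x -> in_lp 2 y ->
  cvgn (series (fun i => x i * y i)).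
Proof.
move=> cx cy; have := in_lpD (ler0n _ 2) cx cy; have := in_lpB (ler0n _ 2) cx cy.
rewrite !in_lp2E => cxBy cxDy.
have : cvgn (series (fun i =>
    4^-1 * ((x i + y i) * (x i + y i) - (x i - y i) * (x i - y i)))).
  exact: is_cvg_seriesZ (is_cvg_seriesB cxDy cxBy).
by congr (cvgn (series _)); apply/funext => i; field.
Qed.

Lemma lpsum2_subZ e x k : in_lp 2 x -> in_lp 2 k ->
  lpsum 2 (fun i => x i - e * k i) = lpsum 2 x - 2 * e * pairing x k + e ^+ 2 * lpsum 2 k.
Proof.
move=> cx ck; have cxx := is_cvg_pairing2 cx cx.
have cxk := is_cvg_pairing2 cx ck; have ckk := is_cvg_pairing2 ck ck.
have -> (r s t : R) : r - 2 * e * s + e ^+ 2 * t = 1 * (1 * r + - (2 * e) * s) + e ^+ 2 * t.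
  by ring.
rewrite !lpsum2E /pairing -!lim_series_comb//; last exact: is_cvg_series_comb.
by congr (limn (series _)); apply/funext => i; ring.
Qed.

Lemma le0_of_ler_quadratic (S c : R) : 0 <= S ->
  (forall e, 0 < e -> 2 * e * c <= e ^+ 2 * S) -> c <= 0.
Proof.
move=> S0 step; rewrite leNgt; apply/negP => c0.
pose e := c / (S + 1); have e0 : 0 < e by rewrite divr_gt0// ltr_wpDl.
have eS : e * S < c by rewrite /e mulrAC ltr_pdivrMr ?ltr_wpDl// ltr_pM2l//; lra.
have := step _ e0; nra.
Qed.

Lemma polar2E K : K `<=` in_lp 2 -> cone K ->
  polar 2 K = [set x | [/\ in_lp 2 x, K (fun=> 0) & forall k, K k -> pairing x k <= 0]].
Proof.
move=> K2 coneK; apply/seteqP; split=> x.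
- move=> Px; have [K0 xmin] := polar_lpsum_le (ltr0n _ 2) K2 Px; have cx := Px.1.
  split=> // k Kk; apply: (le0_of_ler_quadratic (lpsum_ge0 (K2 _ Kk))) => e e0.
  have := xmin _ (coneK _ _ Kk (ltW e0)).
  by rewrite (lpsum2_subZ _ cx (K2 _ Kk)) -addrA lerDl addrC subr_ge0.
- case=> cx K0 xK; apply: polar_of_lpsum_lt => // k Kk k0.
  have -> : (fun i => x i - k i) = (fun i => x i - 1 * k i).
    by apply/funext => i; rewrite mul1r.
  rewrite (lpsum2_subZ _ cx (K2 _ Kk)) expr1n !mul1r mulr1.
  by have := lpsum_gt0 (K2 _ Kk) k0; have := xK _ Kk; lra.
Qed.

Lemma polar2_convex K : closed_convex_cone 2 K -> cvx_set (polar 2 K).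
Proof.
case=> K2 [_ [_ coneK]]; rewrite polar2E// => x y t [cx K0 xK] [cy _ yK] t0 t1.
have two_ge0 : (0 : R) <= 2 by [].
split; [exact: in_lpD two_ge0 (in_lpZ two_ge0 cx) (in_lpZ two_ge0 cy) | exact: K0 |].
move=> k Kk; rewrite pairing_combl; try exact: is_cvg_pairing2 (K2 _ Kk).
by rewrite -(addr0 0) lerD// mulr_ge0_le0 ?xK ?yK// subr_ge0.
Qed.

Lemma wedge_sub_lp p a b : wedge p a b `<=` in_lp p.
Proof. by move=> x []. Qed.

Lemma wedgeE n p a b : finsupp n a -> finsupp n b ->
  lpnorm (conj_exp p) a = 1 -> lpnorm (conj_exp p) b = 1 ->
  wedge p a b = [set x | [/\ in_lp p x, pairing a x <= 0 & pairing b x <= 0]].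
Proof.
move=> an bn a1 b1; apply/seteqP; split=> x.
- case=> cx xW; split=> //; apply: xW.
  + exists 1, 0; do ![split] => //; first by left; exact: oner_neq0.
    have ab10 : (fun j => 1 * a j + 0 * b j) = a.
      by apply/funext => j; rewrite mul1r mul0r addr0.
    by apply/funext => j; rewrite ab10 a1 divr1 mul1r mul0r addr0.
  + exists 0, 1; do ![split] => //; first by right; exact: oner_neq0.
    have ab01 : (fun j => 0 * a j + 1 * b j) = b.
      by apply/funext => j; rewrite mul1r mul0r add0r.
    by apply/funext => j; rewrite ab01 b1 divr1 mul1r mul0r add0r.
- case=> cx ax bx; split=> // _ [l [m [l0 [m0 [_ ->]]]]].
  set N := lpnorm _ _; have N0 : 0 <= N by rewrite /N /lpnorm powR_ge0.
  have -> : (fun i => (l * a i + m * b i) / N) = (fun i => l / N * a i + m / N * b i).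
    by apply/funext => i; rewrite mulrDl mulrAC [m * _ / _]mulrAC.
  rewrite pairing_combl; [|exact: is_cvg_pairing_finsupp an|exact: is_cvg_pairing_finsupp bn].
  by rewrite -(addr0 0) lerD// mulr_ge0_le0// divr_ge0.
Qed.

Lemma wedge_closed_convex_cone n p a b : 0 < p -> finsupp n a -> finsupp n b ->
  lpnorm (conj_exp p) a = 1 -> lpnorm (conj_exp p) b = 1 ->
  closed_convex_cone p (wedge p a b).
Proof.
move=> p0 an bn a1 b1; split; first exact: wedge_sub_lp.
rewrite (wedgeE an bn a1 b1).
have pairing_le0 c u x : finsupp n c -> (forall i, u m i @[m --> \oo] --> x i) ->
    (forall m, pairing c (u m) <= 0) -> pairing c x <= 0.
  move=> cn ux ucn.
  have := cvgr_to_le (cvg_pairing_finsupp cn ux); apply; exact: filterE.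
split.
  move=> u x Wu cx ux; have cu m : in_lp p (u m) by have [] := Wu m.
  have uxi i := cvg_coord_lp (i := i) p0 cu cx ux.
  by split=> //; apply: pairing_le0 uxi _ => // m; have [] := Wu m.
split.
  move=> x y t [cx ax bx] [cy ay b_y] t0 t1; split.
  - exact: in_lpD (ltW p0) (in_lpZ (ltW p0) cx) (in_lpZ (ltW p0) cy).
  - by rewrite (pairing_finsupp_combr _ _ _ _ an) -(addr0 0) lerD// mulr_ge0_le0// subr_ge0.
  - by rewrite (pairing_finsupp_combr _ _ _ _ bn) -(addr0 0) lerD// mulr_ge0_le0// subr_ge0.
move=> x l [cx ax bx] l0; split; first exact: in_lpZ (ltW p0) cx.
- by rewrite (pairing_finsuppZr _ _ an) mulr_ge0_le0.
- by rewrite (pairing_finsuppZr _ _ bn) mulr_ge0_le0.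
Qed.

Lemma powR_MVT p a b : 0 < a -> a < b ->
  exists2 c, a < c < b & b `^ p - a `^ p = p * c `^ (p - 1) * (b - a).
Proof.
move=> a0 ab; case: (@MVT R (@powR R ^~ p) (fun c => p * c `^ (p - 1)) a b ab).
- by move=> c; rewrite in_itv /= => /andP[ac _]; apply: is_derive1_powR; apply: lt_trans ac.
- apply: derivable_within_continuous => c; rewrite in_itv /= => /andP[ac _].
  by apply: derivable_powR; rewrite in_itv /= andbT; apply: lt_le_trans ac.
- by move=> c; rewrite in_itv /= => abc ->; exists c.
Qed.

Lemma powR_gt_tangent1 p b : 1 < p -> 0 < b -> b != 1 -> 1 + p * (b - 1) < b `^ p.
Proof.
move=> p1 b0 b1; have p0 : 0 < p by lra.
have pm1 : 0 < p - 1 by lra.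
have [b_lt1|b_gt1|b_eq1] := ltgtP b 1; last by rewrite b_eq1 eqxx in b1.
- have [c /andP[bc c1]] := powR_MVT p b0 b_lt1; rewrite powR1.
  have : c `^ (p - 1) < 1 `^ (p - 1).
    by apply: gt0_ltr_powR; rewrite ?nnegrE ?ltW// (lt_trans b0).
  rewrite powR1 => hc mvt; rewrite -mulrA in mvt.
  have : p * (c `^ (p - 1) * (1 - b)) < p * (1 - b) by rewrite ltr_pM2l// gtr_pMl// subr_gt0.
  lra.
- have [c /andP[c1 cb]] := powR_MVT p ltr01 b_gt1; rewrite powR1.
  have : 1 `^ (p - 1) < c `^ (p - 1).
    by apply: gt0_ltr_powR; rewrite ?nnegrE ?ltW// (lt_trans ltr01).
  rewrite powR1 => hc mvt; rewrite -mulrA in mvt.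
  have : p * (b - 1) < p * (c `^ (p - 1) * (b - 1)) by rewrite ltr_pM2l// ltr_pMl// subr_gt0.
  lra.
Qed.

Lemma lt_powR_norm_sub1 p t : 1 < p -> t != 0 -> 1 - p * t < `|1 - t| `^ p.
Proof.
move=> p1 t0; have [t_ge1|t_lt1] := leP (1 - t) 0.
  by have := powR_ge0 `|1 - t| p; nra.
rewrite gtr0_norm//; have t1 : 1 - t != 1 by rewrite subr_eq addrC -subr_eq subrr eq_sym.
by have := powR_gt_tangent1 p1 t_lt1 t1; rewrite addrAC subrr add0r mulrN.
Qed.

Lemma lt_powR_norm_sub01 p (a : R) t : 1 < p -> a = 0 \/ a = 1 -> t != 0 ->
  a - p * (a * t) < `|a - t| `^ p.
Proof.
move=> p1 [->|->] t0; last by rewrite mul1r; apply: lt_powR_norm_sub1.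
by rewrite mul0r mulr0 subrr sub0r normrN powR_gt0// normr_gt0.
Qed.

Lemma le_powR_norm_sub01 p (a : R) t : 1 < p -> a = 0 \/ a = 1 ->
  a - p * (a * t) <= `|a - t| `^ p.
Proof.
move=> p1 a01; have [->|t0] := eqVneq t 0; last exact/ltW/lt_powR_norm_sub01.
by case: a01 => ->; rewrite !(mulr0, subr0, normr0, normr1, powR1) ?powR0 ?gt_eqF//; lra.
Qed.

(* Summing the termwise Bernoulli bounds |x_i - k_i|^p >= x_i - p x_i k_i gives
   lpsum p (x - k) >= lpsum p x - p <x, k>, strictly since k <> 0. *)
Lemma lpsum_lt_sub01 n p x k : 1 < p -> finsupp n x -> (forall i, x i = 0 \/ x i = 1) ->
  in_lp p k -> k <> (fun=> 0) -> pairing x k <= 0 ->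
  lpsum p x < lpsum p (fun i => x i - k i).
Proof.
move=> p1 xn x01 ck /nonzero_coord[j kj] xk; have p0 : 0 < p by lra.
have cx : cvgn (series x) := is_cvg_series_finsupp xn.
have cxk : cvgn (series (fun i => x i * k i)).
  by apply: (is_cvg_series_finsupp (n := n)) => i /xn ->; rewrite mul0r.
have -> : lpsum p x = limn (series x).
  rewrite /lpsum; congr (limn (series _)); apply/funext => i.
  by case: (x01 i) => ->; rewrite ?normr0 ?normr1 ?powR1 ?powR0 ?gt_eqF.
have cxBk := in_lpB (ltW p0) (in_lp_finsupp p0 xn) ck.
have := lim_series_lt (is_cvg_series_comb (t := 1) (s := - p) cx cxk) cxBk (j := j).
rewrite lim_series_comb// -/(pairing x k) => lt_lim.
apply: le_lt_trans (lt_lim _ _).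
- by rewrite mul1r mulNr lerDl oppr_ge0 mulr_ge0_le0// ltW.
- by move=> i; rewrite mul1r mulNr; apply: le_powR_norm_sub01.
- by rewrite mul1r mulNr; apply: lt_powR_norm_sub01.
Qed.

Lemma polar_finsupp01 n p K x : 1 < p -> K `<=` in_lp p -> K (fun=> 0) ->
  finsupp n x -> (forall i, x i = 0 \/ x i = 1) -> (forall k, K k -> pairing x k <= 0) ->
  polar p K x.
Proof.
move=> p1 Kp K0 xn x01 xK; have p0 : 0 < p by lra.
apply: polar_of_lpsum_lt => // [|k Kk k0]; first exact: in_lp_finsupp xn.
exact: lpsum_lt_sub01 p1 xn x01 (Kp _ Kk) k0 (xK _ Kk).
Qed.

Lemma is_derive_affine (a b x : R) : is_derive x 1 (fun z : R => a + b * z) b.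
Proof.
have := is_deriveD (is_derive_cst a x 1) (is_deriveZ b (is_derive_id x 1)).
by rewrite add0r => h; exact: is_derive_eq h (mulr1 b).
Qed.

Lemma is_derive_powR_affine p (a b x : R) : 0 < a + b * x ->
  is_derive x 1 (fun z : R => (a + b * z) `^ p) (p * (a + b * x) `^ (p - 1) * b).
Proof.
move=> abx; apply: (@is_derive1_comp R (@powR R ^~ p) (fun z : R => a + b * z)).
  exact: is_derive1_powR.
exact: is_derive_affine.
Qed.

Lemma powRr_inj (a x y : R) : 0 < a -> a != 1 -> a `^ x = a `^ y -> x = y.
Proof.
move=> a0 a1 /(congr1 (@ln R))/eqP; rewrite !ln_powR -subr_eq0 -mulrBl mulf_eq0 ln_eq0//.
by rewrite (negbTE a1) orbF subr_eq0 => /eqP.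
Qed.

Lemma eq2_of_powR_half p : 2 * 2^-1 `^ (p - 1) = 1 -> p = 2.
Proof.
move=> h; have half_pow : (2^-1 : R) `^ (p - 1) = 2^-1 `^ 1.
  by rewrite powRr1//; apply: (@mulfI _ 2) => //; rewrite h mulfV.
have : p - 1 = 1 by apply: (powRr_inj _ _ half_pow) => //; apply/eqP; lra.
lra.
Qed.

Lemma exists_descent (p : R) : 1 < p -> p != 2 ->
  exists2 d, -2^-1 < d < 2^-1 & (1 - d) `^ p + 2 * (2^-1 + d) `^ p < 1 + 2 * 2^-1 `^ p.
Proof.
(* The affine arguments are written [a + b * d] to match [is_derive_powR_affine]. *)
move=> p1 p2; pose phi (d : R) := (1 + -1 * d) `^ p + 2 * (2^-1 + 1 * d) `^ p.
pose dphi (d : R) := p * (1 + -1 * d) `^ (p - 1) * -1 + 2 * (p * (2^-1 + 1 * d) `^ (p - 1) * 1).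
have phi_derive (d : R) : -2^-1 < d < 2^-1 -> is_derive d 1 phi (dphi d).
  move=> /andP[d1 d2]; apply: is_deriveD; last apply: is_deriveZ.
    by apply: is_derive_powR_affine; lra.
  by apply: is_derive_powR_affine; lra.
have phiE (d : R) : phi d = (1 - d) `^ p + 2 * (2^-1 + d) `^ p by rewrite /phi mulN1r mul1r.
apply: contrapT => nodescent.
(* Otherwise 0 is an interior minimum of phi, forcing phi'(0) = p (2 * 2^(1-p) - 1) = 0. *)
have phi_min (t : R) : t \in `]-2^-1, 2^-1[ -> phi 0 <= phi t.
  rewrite in_itv /= => tI; rewrite leNgt; apply/negP => lt_t; apply: nodescent.
  by exists t => //; move: lt_t; rewrite !phiE subr0 addr0 powR1.
have I0 : (0 : R) \in `]-2^-1, 2^-1[ by rewrite in_itv /=; lra.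
have phi_der t : t \in `]-2^-1, 2^-1[ -> derivable phi t 1.
  by rewrite in_itv /= => /phi_derive[].
have ends : -2^-1 <= (2^-1 : R) by lra.
have [_ D0] := derive1_at_min ends phi_der I0 phi_min.
have [_ Dphi0] : is_derive (0 : R) 1 phi (dphi 0) by apply: phi_derive; lra.
move: D0; rewrite {}Dphi0 /dphi !mulr0 !addr0 powR1 /= !mulr1 mulrN1 => D0.
have : p * (2 * 2^-1 `^ (p - 1) - 1) = 0 by rewrite -D0; ring.
move/eqP; rewrite mulf_eq0 gt_eqF /= ?subr_eq0; last lra.
by move/eqP/eq2_of_powR_half => p_eq2; rewrite p_eq2 eqxx in p2.
Qed.

Definition indic (A : seq nat) : nat -> R := fun i => (i \in A)%:R.

Lemma indic01 A i : indic A i = 0 \/ indic A i = 1.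
Proof. by rewrite /indic; case: (i \in A); [right|left]. Qed.

Lemma finsupp_indic n A : all (fun i => (i < n)%N) A -> finsupp n (indic A).
Proof.
move=> /allP An i ni; have /negbTE iA : i \notin A by apply/negP => /An; rewrite ltnNge ni.
by rewrite /indic iA.
Qed.

(* Makes [wedge_normal p j], i.e. half_root p * (e_0 + e_j), a unit vector of l_q. *)
Definition half_root p : R := 2^-1 `^ (conj_exp p)^-1.

Definition wedge_normal p (j : nat) : nat -> R := fun i => half_root p * indic [:: 0; j]%N i.

Definition example_wedge p := wedge p (wedge_normal p 1) (wedge_normal p 2).

Lemma half_root_gt0 p : 0 < half_root p.
Proof. by rewrite powR_gt0. Qed.

Lemma conj_exp_gt0 p : 1 < p -> 0 < conj_exp p.
Proof. by move=> p1; rewrite divr_gt0 //; lra. Qed.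

Lemma finsupp_wedge_normal p j : (j < 3)%N -> finsupp 3 (wedge_normal p j).
Proof.
by move=> j3 i i3; rewrite /wedge_normal (finsupp_indic _ i3) ?mulr0//= j3.
Qed.

Lemma dual_sphere_wedge_normal p j : 1 < p -> j = 1%N \/ j = 2%N ->
  dual_sphere p (wedge_normal p j).
Proof.
move=> p1 j12; have q0 := conj_exp_gt0 p1.
have j3 : (j < 3)%N by case: j12 => ->.
split; first exact: in_lp_finsupp q0 (finsupp_wedge_normal p j3).
rewrite /lpnorm -/(lpsum _ _) (lpsum_finsupp q0 (finsupp_wedge_normal p j3)).
have uq : half_root p `^ conj_exp p = 2^-1.
  by rewrite /half_root -powRrM mulVf ?powRr1// gt_eqF.
rewrite !big_nat_recr//= big_geq// /wedge_normal /indic.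
have halves : 2^-1 + 2^-1 = 1 :> R by field.
case: j12 => -> /=; rewrite !(mulr1, mulr0, normr0, add0r, addr0) powR0 ?gt_eqF//.
  by rewrite gtr0_norm ?half_root_gt0// uq addr0 halves powR1.
by rewrite gtr0_norm ?half_root_gt0// uq addr0 halves powR1.
Qed.

Lemma example_wedgeE p : 1 < p -> example_wedge p =
  [set x | [/\ in_lp p x, pairing (wedge_normal p 1) x <= 0 & pairing (wedge_normal p 2) x <= 0]].
Proof.
move=> p1; have [a1 b1] := (dual_sphere_wedge_normal p1 (or_introl erefl),
  dual_sphere_wedge_normal p1 (or_intror erefl)).
by rewrite /example_wedge (wedgeE (finsupp_wedge_normal p _) (finsupp_wedge_normal p _) a1.2 b1.2).
Qed.

Lemma example_wedge_closed_convex_cone p : 1 < p -> closed_convex_cone p (example_wedge p).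
Proof.
move=> p1; have [a1 b1] := (dual_sphere_wedge_normal p1 (or_introl erefl),
  dual_sphere_wedge_normal p1 (or_intror erefl)).
have p0 : 0 < p by lra.
have [a3 b3] : finsupp 3 (wedge_normal p 1) /\ finsupp 3 (wedge_normal p 2).
  by split; apply: finsupp_wedge_normal.
exact: wedge_closed_convex_cone p0 a3 b3 a1.2 b1.2.
Qed.

Lemma indic_polar_example_wedge p j : 1 < p -> j = 1%N \/ j = 2%N ->
  polar p (example_wedge p) (indic [:: 0; j]%N).
Proof.
move=> p1 j12; have j3 : (j < 3)%N by case: j12 => ->.
rewrite example_wedgeE//; apply: (polar_finsupp01 (n := 3)) => //.
- by move=> k [].
- split; first exact: (in_lp_finsupp (n := 0)) (lt_trans ltr01 p1) _.
  + by rewrite (pairing0r (finsupp_wedge_normal p _)).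
  + by rewrite (pairing0r (finsupp_wedge_normal p _)).
- by apply: finsupp_indic; rewrite /= j3.
- exact: indic01.
move=> k [_ ak bk]; have : pairing (wedge_normal p j) k <= 0 by case: j12 => ->.
rewrite /wedge_normal pairingZl ?pmulr_rle0 ?half_root_gt0//.
by apply: (is_cvg_pairing_finsupp (n := 3)); apply: finsupp_indic; rewrite /= j3.
Qed.

Lemma midpoint_not_polar_example_wedge p : 1 < p -> p != 2 ->
  ~ polar p (example_wedge p)
      (fun i => 2^-1 * indic [:: 0; 1]%N i + (1 - 2^-1) * indic [:: 0; 2]%N i).
Proof.
move=> p1 p2 Pz; have p0 : 0 < p by lra.
have [d /andP[d1 d2] descent] := exists_descent p1 p2.
pose k i : R := match i with 0%N => d | 1%N | 2%N => - d | _ => 0 end.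
have k3 : finsupp 3 k by case=> [|[|[|]]].
have Wk : example_wedge p k.
  rewrite example_wedgeE//; split; first exact: in_lp_finsupp p0 k3.
  + rewrite (pairing_finsupp _ (finsupp_wedge_normal p _))//.
    by rewrite !big_nat_recr//= big_geq// /wedge_normal /indic /=; lra.
  + rewrite (pairing_finsupp _ (finsupp_wedge_normal p _))//.
    by rewrite !big_nat_recr//= big_geq// /wedge_normal /indic /=; lra.
have [_ zmin] := polar_lpsum_le p0 (@wedge_sub_lp _ _ _) Pz.
set z := fun i => _ in zmin; have z3 : finsupp 3 z.
  by case=> [|[|[|i]]] // _; rewrite /z /indic /= !mulr0 addr0.
have zk3 : finsupp 3 (fun i => z i - k i) by move=> i i3; rewrite z3 ?k3// subr0.
have := zmin _ Wk; rewrite (lpsum_finsupp p0 z3) (lpsum_finsupp p0 zk3).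
rewrite !big_nat_recr//= !big_geq// /z /k /indic /= !(mulr1, mulr0, addr0, add0r, opprK).
have half : 1 - 2^-1 = 2^-1 :> R by field.
by rewrite half -mulr2n -[_ *+ 2]mulr_natr mulVf// addrC !ger0_norm ?powR1; lra.
Qed.

Lemma example_wedge_polar_not_convex p : 1 < p -> p != 2 -> ~ cvx_set (polar p (example_wedge p)).
Proof.
move=> p1 p2 cvx; apply: (midpoint_not_polar_example_wedge p1 p2).
apply: cvx; [exact: indic_polar_example_wedge (or_introl _) |
  exact: indic_polar_example_wedge (or_intror _) | lra | lra].
Qed.

End LpCones.

Theorem mainTheorem8 (R : realType) (p : R) (hp : 1 < p) :
  ((forall K : set (nat -> R), closed_convex_cone p K -> cvx_set (polar p K))
     <-> p = 2)
  /\
  (p != 2 ->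
    exists a b : nat -> R,
      [/\ dual_sphere p a, dual_sphere p b,
          b <> a /\ b <> (fun i => - a i),
          (forall i : nat, (3 <= i)%N -> a i = 0 /\ b i = 0) &
          ~ cvx_set (polar p (wedge p a b))]).
Proof.
split.
  split=> [cvx_polars|->]; last exact: polar2_convex.
  apply/eqP; apply: contraT => /(example_wedge_polar_not_convex hp)[].
  exact/cvx_polars/example_wedge_closed_convex_cone.
move=> p2; exists (wedge_normal p 1), (wedge_normal p 2); split.
- exact: dual_sphere_wedge_normal (or_introl _).
- exact: dual_sphere_wedge_normal (or_intror _).
- have u0 := half_root_gt0 p.
  split=> [/(congr1 (fun v => v 1%N))|/(congr1 (fun v => v 0%N))]; rewrite /wedge_normal /indic /=; lra.
- by move=> i i3; rewrite !finsupp_wedge_normal.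
- exact: example_wedge_polar_not_convex.
Qed.
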